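(* Let $\mathcal F$ be a symmetric conservative clone with carrier $A$. Then $\rhd_0=\rhd_1=\mathrm R_2(\mathcal F)\cap(A^2_2\times A^2_2)$, and one of the following five cases holds, where in each case the stated equivalence holds for both $i=0$ and $i=1$ and for all $\mathbf x,\mathbf y\in A^2_2$: (1) $\mathbf x\rhd_i\mathbf y$ always; (2) $\mathbf x\rhd_i\mathbf y\iff\mathrm t(\mathbf x,\mathbf y)=0$; (3) $\mathbf x\rhd_i\mathbf y\iff\mathrm t(\mathbf x,\mathbf y)\in\{0,1\}$; (4) $|A|=4$ and $\mathbf x\rhd_i\mathbf y\iff\mathrm t(\mathbf x,\mathbf y)\in\{0,1,2\}$; (5) $|A|=3$ and $\mathbf x\rhd_i\mathbf y\iff\mathrm t(\mathbf x,\mathbf y)\in\{0,01,10\}$.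
   Context: $\mathcal O(A)=\bigcup_{n<\omega}A^{A^n}$; $\mathcal F_{[2]}=\mathcal F\cap A^{A^2}$; $S_A$ the permutations of $A$. A clone with carrier $A$ is a subset of $\mathcal O(A)$ containing all projections and closed under composition; conservative if $f(\mathbf a)\in\mathrm{ran}\,\mathbf a$ (set of entries) for all members; symmetric if $f_\sigma(\mathbf a)=\sigma^{-1}(f(\sigma(\mathbf a)))$ is a member for each member $f$ and $\sigma\in S_A$. $A^2_2$ is the set of pairs $\mathbf a=a_0a_1$ with $a_0\ne a_1$. $\mathrm R_2(\mathcal F)$: $\mathbf a\,\mathrm R_2(\mathcal F)\,\mathbf b$ iff some $\sigma\in S_A$ has $f(\mathbf b)=\sigma(f(\mathbf a))$ for all $f\in\mathcal F_{[2]}$. For $i\in\{0,1\}$, $\rhd_i$ is the relation on $A^2_2$: $\mathbf a\rhd_i\mathbf b$ iff for every $f\in\mathcal F_{[2]}$, $f(\mathbf a)=a_i$ implies $f(\mathbf b)=b_i$. The type $\mathrm t(\mathbf a,\mathbf b)$ of $\mathbf a=a_0a_1,\mathbf b=b_0b_1\in A^2_2$ is: $0$ if $\mathbf a=\mathbf b$; $1$ if $a_0=b_1$ and $a_1=b_0$; the string $ij$ ($i,j\in\{0,1\}$) if $a_i=b_j$ and $a_{1-i}\ne b_{1-j}$; $2$ if $\{a_0,a_1\}\cap\{b_0,b_1\}=\emptyset$. *)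

From mathcomp Require Import all_boot.
Set Implicit Arguments. Unset Strict Implicit. Unset Printing Implicit Defensive.

Definition op (A : Type) (n : nat) := ('I_n -> A) -> A.
Definition opset (A : Type) := forall n : nat, op A n -> Prop.

Definition is_clone (A : Type) (F : opset A) : Prop :=
  (forall n (i : 'I_n), F n (fun a => a i)) /\
  (forall n m (f : op A n) (g : 'I_n -> op A m),
      F n f -> (forall i, F m (g i)) -> F m (fun a => f (fun i => g i a))).

Definition conservative (A : Type) (F : opset A) : Prop :=
  forall n (f : op A n), F n f -> forall a : 'I_n -> A, exists i, f a = a i.

Definition symmetric_clone (A : Type) (F : opset A) : Prop :=
  forall n (f : op A n), F n f ->
  forall (sigma sigmai : A -> A), cancel sigma sigmai -> cancel sigmai sigma ->
    F n (fun a => sigmai (f (fun i => sigma (a i)))).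

Definition ent (A : Type) (x : A * A) : 'I_2 -> A :=
  fun i => if val i == 0 then x.1 else x.2.
(* x_i for i in {0,1} (false = 0, true = 1) *)
Definition sel (A : Type) (x : A * A) (i : bool) : A := if i then x.2 else x.1.

Definition distinct2 (A : Type) (x : A * A) : Prop := x.1 <> x.2.

Definition R2 (A : Type) (F : opset A) (a b : A * A) : Prop :=
  exists sigma sigmai : A -> A, cancel sigma sigmai /\ cancel sigmai sigma /\
    forall f : op A 2, F 2 f -> f (ent b) = sigma (f (ent a)).

Definition rhd (A : Type) (F : opset A) (i : bool) (a b : A * A) : Prop :=
  forall f : op A 2, F 2 f -> f (ent a) = sel a i -> f (ent b) = sel b i.

Inductive ptype : Type :=
| T0 | T1 | Tij (i j : bool) | T2.

Definition has_type (A : Type) (a b : A * A) (tau : ptype) : Prop :=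
  match tau with
  | T0 => a = b
  | T1 => a.1 = b.2 /\ a.2 = b.1
  | Tij i j => sel a i = sel b j /\ sel a (~~ i) <> sel b (~~ j)
  | T2 => a.1 <> b.1 /\ a.1 <> b.2 /\ a.2 <> b.1 /\ a.2 <> b.2
  end.

Definition card_is (A : Type) (n : nat) : Prop :=
  exists e : 'I_n -> A, bijective e.

(* Write [R] for |>_0.  It is a preorder, and since [F] is symmetric it is invariant
   under every permutation of [A].  Two pairs of pairs of the same type lie in one
   S_A-orbit, so whether [R x y] holds depends only on t(x, y); in particular [R] is
   symmetric, and conservativity then identifies |>_1 (the converse of [R]) with [R].
   Thus [R] is described by the set of types it realizes, and transitivity through
   well-chosen intermediate pairs decides which sets are possible: type 00 (or 11)
   forces every type; type 01 (or 10) leaves no room for a fourth point of [A];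
   type 2 leaves no room for a fifth point and forces type 1. *)

From Stdlib Require Import List Classical ClassicalEpsilon FunctionalExtensionality.
From mathcomp Require Import all_boot.
Set Implicit Arguments. Unset Strict Implicit. Unset Printing Implicit Defensive.

Local Notation T00 := (Tij false false).
Local Notation T01 := (Tij false true).
Local Notation T10 := (Tij true false).
Local Notation T11 := (Tij true true).

Ltac by_type := unfold distinct2 in *; simpl in *; repeat split; congruence.

Ltac nodup :=
  repeat (apply: NoDup_cons; first by simpl; intuition congruence); exact: NoDup_nil.

Section Permutations.
Variable A : Type.

Definition transposition (p q : A) (z : A) : A :=
  if excluded_middle_informative (z = p) then q
  else if excluded_middle_informative (z = q) then p else z.

Lemma transposition_l p q : transposition p q p = q.
Proof. by rewrite /transposition; case: excluded_middle_informative. Qed.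

Lemma transposition_id p q z : z <> p -> z <> q -> transposition p q z = z.
Proof.
by rewrite /transposition => zp zq; do 2 case: excluded_middle_informative => //.
Qed.

Lemma transpositionK p q : involutive (transposition p q).
Proof.
move=> z; rewrite /transposition.
by do 5 (case: excluded_middle_informative => //=; try congruence).
Qed.

Lemma exists_perm_map (us vs : list A) :
  NoDup us -> NoDup vs -> length us = length vs ->
  exists s si : A -> A, cancel s si /\ cancel si s /\ List.map s us = vs.
Proof.
elim: us vs => [|u us IH] [|v vs] //= Hu Hv; first by exists id, id.
move: Hu Hv => /NoDup_cons_iff[uNus Hus] /NoDup_cons_iff[vNvs Hvs] [Hl].
have [s [si [sK [siK Hm]]]] := IH vs Hus Hvs Hl.
exists (transposition (s u) v \o s), (si \o transposition (s u) v).
split; last split.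
- by move=> z /=; rewrite transpositionK sK.
- by move=> z /=; rewrite siK transpositionK.
- rewrite /= transposition_l -map_map Hm; congr (_ :: _).
  rewrite -[RHS]map_id; apply: map_ext_in => w wvs.
  apply: transposition_id; last by move=> wv; apply: vNvs; rewrite -wv.
  move=> wsu; move: wvs; rewrite wsu -Hm => /in_map_iff[u' [su'u u'us]].
  by apply: uNus; rewrite -(sK u) -su'u sK.
Qed.

Lemma card_is_of_cover (w : A) (ws : list A) :
  NoDup (w :: ws) -> (forall z, In z (w :: ws)) -> card_is A (length (w :: ws)).
Proof.
set l := w :: ws => Hl Hcover.
pose e (i : 'I_(length l)) := List.nth (val i) l w.
have e_surj z : exists i, e i = z.
  have [k [Hk <-]] := In_nth l z w (Hcover z).
  by exists (Ordinal (introT ltP Hk)).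
pose g z := proj1_sig (constructive_indefinite_description _ (e_surj z)).
exists e; exists g => [i|z]; rewrite /g; case: constructive_indefinite_description => //= j.
by move=> Eji; apply/val_inj/(proj1 (NoDup_nth l w) Hl) => //; apply/ltP/ltn_ord.
Qed.

Lemma third_point (p q r : A) : p <> q -> r <> p -> r <> q ->
  forall a b : A, exists c, c <> a /\ c <> b.
Proof.
move=> pq rp rq a b; apply: NNPP => Hno.
have ab c : c = a \/ c = b.
  by apply: NNPP => Hc; apply: Hno; exists c; split => E; apply: Hc; auto.
by case: (ab p) (ab q) (ab r) => [] ? [] ? [] ?; congruence.
Qed.

End Permutations.

Section PairTypes.
Variable A : Type.

Definition map_pair (s : A -> A) (x : A * A) : A * A := (s x.1, s x.2).
Definition swap_pair (x : A * A) : A * A := (x.2, x.1).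

Lemma sel_map_pair s x i : sel (map_pair s x) i = s (sel x i).
Proof. by case: i. Qed.

Lemma ent_map_pair s x : (fun k => s (ent x k)) = ent (map_pair s x).
Proof. by apply: functional_extensionality => k; rewrite /ent; case: (val k == 0). Qed.

Lemma has_type_exists (x y : A * A) : distinct2 x -> distinct2 y -> exists tau, has_type x y tau.
Proof.
case: x y => [a b] [c d]; rewrite /distinct2 /= => ab cd.
case: (classic (a = c)) (classic (a = d)) (classic (b = c)) (classic (b = d))
  => [ac|nac] [ad|nad] [bc|nbc] [bd|nbd]; try congruence.
- by exists T0; congr pair.
- by exists T00.
- by exists T1.
- by exists T01.
- by exists T10.
- by exists T11.
- by exists T2.
Qed.

Lemma ent_swap_pair (x : A * A) : (fun k => ent x (rev_ord k)) = ent (swap_pair x).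
Proof. by apply: functional_extensionality => -[[|[|k]] Hk]. Qed.

Lemma NoDup_pair (x : A * A) : distinct2 x -> NoDup [:: x.1; x.2].
Proof.
move=> dx; apply: NoDup_cons; first by case=> // E; apply: dx.
by apply: NoDup_cons => //; exact: NoDup_nil.
Qed.

Definition ptype_swap (tau : ptype) : ptype :=
  if tau is Tij i j then Tij (~~ i) (~~ j) else tau.
Definition ptype_transpose (tau : ptype) : ptype :=
  if tau is Tij i j then Tij j i else tau.

Lemma has_type_swap (x y : A * A) tau :
  has_type x y tau -> has_type (swap_pair x) (swap_pair y) (ptype_swap tau).
Proof.
case: x y => [a b] [c d]; case: tau => [||[] []|] /=; try tauto; congruence.
Qed.

Lemma has_type_transpose (x y : A * A) tau :
  has_type x y tau -> has_type y x (ptype_transpose tau).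
Proof.
case: x y => [a b] [c d]; case: tau => [||[] []|] /=; intuition congruence.
Qed.

Lemma exists_perm_map_pairs (us vs : list A) (x y x' y' : A * A) :
  NoDup us -> NoDup vs -> length us = length vs ->
  (forall s, List.map s us = vs -> map_pair s x = x' /\ map_pair s y = y') ->
  exists s si : A -> A, [/\ cancel s si, cancel si s,
    map_pair s x = x' & map_pair s y = y'].
Proof.
move=> Hus Hvs Hl Hxy; have [s [si [sK [siK /Hxy[]]]]] := exists_perm_map Hus Hvs Hl.
by exists s, si.
Qed.

Ltac transport_by us vs :=
  apply: (@exists_perm_map_pairs us vs);
  [ nodup | nodup
  | done
  | move=> s /= [] *; rewrite /map_pair /=; split; congr pair; congruence ].

Lemma has_type_transport tau (x y x' y' : A * A) :
  distinct2 x -> distinct2 y -> distinct2 x' -> distinct2 y' ->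
  has_type x y tau -> has_type x' y' tau ->
  exists s si : A -> A, [/\ cancel s si, cancel si s,
    map_pair s x = x' & map_pair s y = y'].
Proof.
case: x y x' y' => [a b] [c d] [a' b'] [c' d']; rewrite /distinct2 /=.
case: tau => [||[] []|] /= ab cd a'b' c'd'.
- by move=> [? ?] [? ?]; transport_by [:: a; b] [:: a'; b'].
- by move=> [? ?] [? ?]; transport_by [:: c; d] [:: c'; d'].
- by move=> [? ?] [? ?]; transport_by [:: a; b; c] [:: a'; b'; c'].
- by move=> [? ?] [? ?]; transport_by [:: a; b; d] [:: a'; b'; d'].
- by move=> [? ?] [? ?]; transport_by [:: a; b; c] [:: a'; b'; c'].
- by move=> [? ?] [? ?]; transport_by [:: a; b; d] [:: a'; b'; d'].
- by move=> [? [? [? ?]]] [? [? [? ?]]]; transport_by [:: a; b; c; d] [:: a'; b'; c'; d'].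
Qed.

End PairTypes.

Section SymmetricConservativeClone.
Variables (A : Type) (F : opset A).
Arguments F : clear implicits.
Hypotheses (HF : is_clone F) (Hcons : conservative F) (Hsym : symmetric_clone F).
Implicit Types (x y z : A * A) (a b c d : A).

Local Notation R := (rhd F false).

Lemma rhd_refl i x : rhd F i x x.
Proof. by move=> f _. Qed.

Lemma rhd_trans i x y z : rhd F i x y -> rhd F i y z -> rhd F i x z.
Proof. by move=> Hxy Hyz f Hf /(Hxy f Hf); apply: Hyz. Qed.

Lemma rhd_map_pair i s si x y : cancel s si -> cancel si s ->
  rhd F i x y -> rhd F i (map_pair s x) (map_pair s y).
Proof.
move=> sK siK Hxy f Hf Hx.
have := Hxy _ (Hsym Hf sK siK); rewrite !ent_map_pair Hx sel_map_pair sK.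
by move=> /(_ erefl) Ey; rewrite sel_map_pair -Ey siK.
Qed.

Lemma binary_conservative f x : F 2 f -> f (ent x) = x.1 \/ f (ent x) = x.2.
Proof. by move=> /Hcons /(_ (ent x)) [k ->]; rewrite /ent; case: (val k == 0); auto. Qed.

Lemma rhd_true_iff x y : distinct2 x -> distinct2 y -> rhd F true x y <-> R y x.
Proof.
rewrite /distinct2 => dx dy; split=> H f Hf Ef.
- case: (binary_conservative x Hf) => // /(H f Hf); rewrite /sel in Ef *; congruence.
- case: (binary_conservative y Hf) => // /(H f Hf); rewrite /sel in Ef *; congruence.
Qed.

Lemma rhd_transport i tau x y x' y' :
  distinct2 x -> distinct2 y -> distinct2 x' -> distinct2 y' ->
  has_type x y tau -> has_type x' y' tau -> rhd F i x y -> rhd F i x' y'.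
Proof.
move=> dx dy dx' dy' Ht Ht'.
have [s [si [sK siK <- <-]]] := has_type_transport dx dy dx' dy' Ht Ht'.
exact: rhd_map_pair.
Qed.

Lemma rhd_sym i x y : distinct2 x -> distinct2 y -> rhd F i x y -> rhd F i y x.
Proof.
move=> dx dy Hxy; have [tau Ht] := has_type_exists dx dy.
have transport x' y' : distinct2 x' -> distinct2 y' -> has_type x' y' tau -> rhd F i x' y'.
  by move=> dx' dy' Ht'; apply: rhd_transport dx dy dx' dy' Ht Ht' Hxy.
have := has_type_transpose Ht; move: dx dy Ht transport; clear Hxy.
case: x y => [a b] [c d]; rewrite /distinct2 /= => ab cd.
(* a type [01] or [10] is not self-transposed; it is reversed along a 3-cycle *)
case: tau => [||[] []|] Ht transport Htr; try exact: transport; move: Ht => /= [E N].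
- by apply: (rhd_trans (y := (d, a))); apply: transport; by_type.
- by apply: (rhd_trans (y := (b, c))); apply: transport; by_type.
Qed.

Lemma rhd_iff_R i x y : distinct2 x -> distinct2 y -> rhd F i x y <-> R x y.
Proof.
case: i => // dx dy; rewrite rhd_true_iff //.
by split; apply: rhd_sym.
Qed.

Lemma R_iff_R2 x y : distinct2 x -> distinct2 y -> R x y <-> R2 F x y.
Proof.
move=> dx dy; split=> [Hxy | [s [si [sK [siK Hs]]]] f Hf Ef]; last first.
  (* the first projection shows that [s] maps [x.1] to [y.1] *)
  by rewrite (Hs f Hf) Ef -(Hs _ (proj1 HF 2 ord0)).
have [s [si [sK [siK [Ex Ey]]]]] := exists_perm_map (NoDup_pair dx) (NoDup_pair dy) erefl.
exists s, si; do 2 split => //; move=> f Hf.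
case: (binary_conservative x Hf) => Ef; first by rewrite Ef Ex; apply: Hxy.
rewrite Ef Ey; case: (binary_conservative y Hf) => // Ef'.
have := rhd_sym dx dy Hxy Hf Ef'; rewrite /sel in dx Ef *; congruence.
Qed.

Lemma R_swap x y : distinct2 x -> distinct2 y -> R x y -> R (swap_pair x) (swap_pair y).
Proof.
move=> dx dy Hxy f Hf Ef.
have Hg : F 2 (fun u => f (fun k => u (rev_ord k))).
  exact: (proj2 HF 2 2 f (fun k u => u (rev_ord k)) Hf (fun k => proj1 HF 2 (rev_ord k))).
by have := (rhd_iff_R true dx dy).2 Hxy _ Hg; rewrite !ent_swap_pair; apply.
Qed.

Definition realized (tau : ptype) : Prop :=
  exists x y, [/\ distinct2 x, distinct2 y, has_type x y tau & R x y].

Definition realized_exactly (ts : list ptype) : Prop :=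
  forall tau, realized tau <-> In tau ts.

Lemma R_of_realized tau x y :
  realized tau -> distinct2 x -> distinct2 y -> has_type x y tau -> R x y.
Proof.
by move=> [x0 [y0 [dx0 dy0 Ht0 H0]]] dx dy Ht; exact: rhd_transport dx0 dy0 dx dy Ht0 Ht H0.
Qed.

Lemma realized_T0 tau : realized tau -> realized T0.
Proof. by move=> [x [y [dx _ _ _]]]; exists x, x; split=> //; apply: rhd_refl. Qed.

Lemma realized_swap tau : realized tau -> realized (ptype_swap tau).
Proof.
move=> [x [y [dx dy Ht Hxy]]]; exists (swap_pair x), (swap_pair y).
by split; [apply: nesym | apply: nesym | apply: has_type_swap | apply: R_swap].
Qed.

Lemma realized_transpose tau : realized tau -> realized (ptype_transpose tau).
Proof.
move=> [x [y [dx dy Ht Hxy]]]; exists y, x.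
by split=> //; [apply: has_type_transpose | apply: rhd_sym].
Qed.

Lemma R_iff_types ts : realized_exactly ts ->
  forall x y, distinct2 x -> distinct2 y -> R x y <-> Exists (has_type x y) ts.
Proof.
move=> Hts x y dx dy; rewrite Exists_exists; split=> [Hxy | [tau [/Hts Htau Ht]]].
- have [tau Ht] := has_type_exists dx dy.
  by exists tau; split=> //; apply/Hts; exists x, y.
- exact: R_of_realized Htau dx dy Ht.
Qed.

Lemma three_points_of_Tij i j :
  realized (Tij i j) -> exists p q r : A, [/\ p <> q, r <> p & r <> q].
Proof.
move=> [[a b] [[c d] [ab cd Ht _]]]; move: ab cd; rewrite /distinct2 /= => ab cd.
by case: i j Ht => [] [] /= [E N]; [exists a, b, c | exists a, b, d | exists a, b, c
  | exists a, b, d]; split; congruence.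
Qed.

Lemma R_total_of_T00 : realized T00 ->
  forall x y, distinct2 x -> distinct2 y -> R x y.
Proof.
move=> H00.
have R00 a b c : a <> b -> c <> a -> c <> b -> R (a, b) (a, c).
  by move=> *; apply: (R_of_realized H00); by_type.
have R11 a b c : a <> b -> c <> a -> c <> b -> R (a, b) (c, b).
  by move=> *; apply: (R_of_realized (realized_swap H00)); by_type.
have [p [q [r [pq rp rq]]]] := three_points_of_Tij H00.
move=> [a b] [c d] dx dy; have [tau Ht] := has_type_exists dx dy.
move: dx dy; rewrite /distinct2 /= => ab cd.
case: tau Ht => [||[] []|] /=; first by case=> <- <-; apply: rhd_refl.
- move=> [ad bc]; have [e [ea eb]] := third_point pq rp rq a b.
  apply: (rhd_trans (y := (a, e))); first exact: R00.
  by apply: (rhd_trans (y := (c, e))); [apply: R11 | apply: R00]; congruence.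
- by move=> [E ?]; rewrite -E; apply: R11; congruence.
- by move=> [? ?]; apply: (rhd_trans (y := (a, d))); [apply: R00 | apply: R11]; congruence.
- by move=> [? ?]; apply: (rhd_trans (y := (c, b))); [apply: R11 | apply: R00]; congruence.
- by move=> [E ?]; rewrite -E; apply: R00; congruence.
- by move=> [? [? [? ?]]]; apply: (rhd_trans (y := (a, d))); [apply: R00 | apply: R11];
    congruence.
Qed.

Lemma card3_of_T01 : ~ realized T00 -> realized T01 ->
  card_is A 3 /\ realized_exactly [:: T0; T01; T10].
Proof.
move=> n00 H01.
have n11 : ~ realized T11 := fun H => n00 (realized_swap H).
have R01 a b c : a <> b -> c <> a -> c <> b -> R (a, b) (c, a).
  by move=> *; apply: (R_of_realized H01); by_type.
have no4 a b c d : a <> b -> c <> a -> c <> b -> d <> a -> d <> b -> d <> c -> False.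
  move=> *; apply: n00; exists (a, b), (a, d); split; try by_type.
  apply: (rhd_trans (y := (c, a))); first exact: R01.
  by apply: (rhd_trans (y := (d, c))); apply: R01; congruence.
have n1 : ~ realized T1.
  move=> [[a b] [[c d] [ab cd /= [ad bc] Hxy]]]; move: ab cd; rewrite /distinct2 /= => ab cd.
  have [p [q [r [pq rp rq]]]] := three_points_of_Tij H01.
  have [e [ea eb]] := third_point pq rp rq a b.
  apply: n11; exists (a, b), (e, c); split; try by_type.
  by apply: (rhd_trans (y := (c, d))) => //; apply: R01; congruence.
have n2 : ~ realized T2.
  by move=> [[a b] [[c d] [ab cd /= [? [? [? ?]]] _]]]; apply: (no4 a b c d); by_type.
have [p [q [r [pq rp rq]]]] := three_points_of_Tij H01.
split.
- apply: (card_is_of_cover (w := p) (ws := [:: q; r])); first by nodup.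
  by move=> z; apply: NNPP => /= Hz; apply: (no4 p q r z); intuition congruence.
- have H0 := realized_T0 H01; have H10 := realized_transpose H01.
  by case=> [||[] []|] /=; intuition discriminate.
Qed.

Lemma card4_of_T2 : ~ realized T00 -> ~ realized T01 -> realized T2 ->
  card_is A 4 /\ realized_exactly [:: T0; T1; T2].
Proof.
move=> n00 n01 H2.
have n11 : ~ realized T11 := fun H => n00 (realized_swap H).
have n10 : ~ realized T10 := fun H => n01 (realized_transpose H).
have R2 a b c d : a <> b -> c <> d -> c <> a -> c <> b -> d <> a -> d <> b ->
    R (a, b) (c, d).
  by move=> *; apply: (R_of_realized H2); by_type.
have no5 a b c d e : a <> b -> c <> d -> c <> a -> c <> b -> d <> a -> d <> b ->
    e <> a -> e <> b -> e <> c -> e <> d -> False.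
  move=> *; apply: n00; exists (a, b), (a, e); split; try by_type.
  by apply: (rhd_trans (y := (c, d))); apply: R2; congruence.
have [[p q] [[r t] [pq rt /= [rp [tp [rq tq]]] _]]] := H2.
move: pq rt; rewrite /distinct2 /= => pq rt.
have H1 : realized T1.
  exists (p, q), (q, p); split; try by_type.
  by apply: (rhd_trans (y := (r, t))); apply: R2; congruence.
split.
- apply: (card_is_of_cover (w := p) (ws := [:: q; r; t])); first by nodup.
  by move=> z; apply: NNPP => /= Hz; apply: (no5 p q r t z); intuition congruence.
- have H0 := realized_T0 H2.
  by case=> [||[] []|] /=; intuition discriminate.
Qed.

Lemma classification :
  (forall x y, distinct2 x -> distinct2 y -> R x y)
  \/ realized_exactly [:: T0]
  \/ realized_exactly [:: T0; T1]
  \/ (card_is A 4 /\ realized_exactly [:: T0; T1; T2])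
  \/ (card_is A 3 /\ realized_exactly [:: T0; T01; T10]).
Proof.
have [H00 | n00] := classic (realized T00); first by left; exact: R_total_of_T00.
have [H01 | n01] := classic (realized T01); first by do 4 right; exact: card3_of_T01.
have [H2 | n2] := classic (realized T2); first by do 3 right; left; exact: card4_of_T2.
have n11 : ~ realized T11 := fun H => n00 (realized_swap H).
have n10 : ~ realized T10 := fun H => n01 (realized_transpose H).
have [H1 | n1] := classic (realized T1).
  have H0 := realized_T0 H1.
  by do 2 right; left; case=> [||[] []|] /=; intuition discriminate.
have [H0 | n0] := classic (realized T0).
  by right; left; case=> [||[] []|] /=; intuition discriminate.
(* [A] has no two distinct elements, so case (1) holds vacuously *)
left=> x y dx _; case: n0; exists x, x; split=> //; exact: rhd_refl.
Qed.

End SymmetricConservativeClone.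

Theorem mainTheorem18 (A : Type) (F : opset A)
  (HF : is_clone F) (Hcons : conservative F) (Hsym : symmetric_clone F) :
  (forall x y : A * A, distinct2 x -> distinct2 y ->
     (rhd F false x y <-> rhd F true x y) /\ (rhd F false x y <-> R2 F x y)) /\
  ((forall (i : bool) (x y : A * A), distinct2 x -> distinct2 y -> rhd F i x y)
   \/ (forall (i : bool) (x y : A * A), distinct2 x -> distinct2 y ->
        (rhd F i x y <-> has_type x y T0))
   \/ (forall (i : bool) (x y : A * A), distinct2 x -> distinct2 y ->
        (rhd F i x y <-> has_type x y T0 \/ has_type x y T1))
   \/ (card_is A 4 /\
       forall (i : bool) (x y : A * A), distinct2 x -> distinct2 y ->
        (rhd F i x y <-> has_type x y T0 \/ has_type x y T1 \/ has_type x y T2))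
   \/ (card_is A 3 /\
       forall (i : bool) (x y : A * A), distinct2 x -> distinct2 y ->
        (rhd F i x y <-> has_type x y T0 \/ has_type x y (Tij false true)
                         \/ has_type x y (Tij true false)))).
Proof.
split=> [x y dx dy | ].
  by rewrite (rhd_iff_R Hcons Hsym true dx dy) (R_iff_R2 HF Hcons Hsym dx dy).
have by_types ts : realized_exactly F ts -> forall i x y, distinct2 x -> distinct2 y ->
    rhd F i x y <-> Exists (has_type x y) ts.
  by move=> Hts i x y dx dy; rewrite (rhd_iff_R Hcons Hsym i dx dy) (R_iff_types Hsym Hts dx dy).
have [Hall | [Hts | [Hts | [[C4 Hts] | [C3 Hts]]]]] := classification HF Hcons Hsym.
- by left=> i x y dx dy; apply/(rhd_iff_R Hcons Hsym i dx dy)/Hall.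
- by right; left=> i x y dx dy; rewrite by_types // !Exists_cons Exists_nil; tauto.
- by do 2 right; left=> i x y dx dy; rewrite by_types // !Exists_cons Exists_nil; tauto.
- by do 3 right; left; split=> // i x y dx dy; rewrite by_types // !Exists_cons Exists_nil; tauto.
- by do 4 right; split=> // i x y dx dy; rewrite by_types // !Exists_cons Exists_nil; tauto.
Qed.
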